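(* Let $G$ be a finite connected graph with $\operatorname{diam}(G) = 2$. Then $\mathrm{gp_e}(G) = m(G)$, where $m(G)$ denotes the number of edges of $G$.
   Context: A geodesic in a graph is a shortest path between two vertices. A set $S$ of edges of a graph $G$ is an edge general position set if no geodesic of $G$ contains three edges of $S$. The edge general position number $\mathrm{gp_e}(G)$ is the maximum cardinality of an edge general position set of $G$. $\operatorname{diam}(G)$ is the maximum distance between two vertices of $G$. *)

(* A finite simple graph is a symmetric irreflexive
   relation e : rel T on a finType T. *)
From Stdlib Require Import ClassicalEpsilon.
From mathcomp Require Import all_boot.
Set Implicit Arguments. Unset Strict Implicit. Unset Printing Implicit Defensive.

Section Graph.
Variables (T : finType) (e : rel T).

Definition walkn (u v : T) (n : nat) : bool :=
  [exists p : n.-tuple T, path e u p && (last u p == v)].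

(* distance: least n < #|T| with a walk of length n (walks of length < #|T|
   suffice in a connected graph); #|T| if none *)
Definition dist (u v : T) : nat := find (walkn u v) (iota 0 #|T|).

Definition connected_graph : Prop := forall u v : T, connect e u v.

Definition diam : nat := \max_(u : T) \max_(v : T) dist u v.

Definition edges : {set {set T}} := [set [set x; y] | x in T, y in T & e x y].

Definition walk_edges (u : T) (p : seq T) : {set {set T}} :=
  [set:: pairmap (fun a b => [set a; b]) u p].

Definition geodesic (u v : T) (p : seq T) : bool :=
  path e u p && (last u p == v) && (size p == dist u v).

Definition edge_gp_set (S : {set {set T}}) : Prop :=
  S \subset edges /\
  forall (u v : T) (p : seq T), geodesic u v p -> #|S :&: walk_edges u p| < 3.

(* classical decision of the Prop edge_gp_set, to filter a finite max *)
Definition edge_gp_setb (S : {set {set T}}) : bool :=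
  if excluded_middle_informative (edge_gp_set S) then true else false.

Definition gpe : nat :=
  \max_(S : {set {set T}} | edge_gp_setb S) #|S|.
End Graph.

(* A geodesic has length dist u v <= diam G = 2, hence traverses at most two
   edges; so no geodesic contains three edges of E(G), i.e. E(G) itself is an
   edge general position set, and it is obviously the largest one. *)
From Stdlib Require Import ClassicalEpsilon.
From mathcomp Require Import all_boot.

Set Implicit Arguments. Unset Strict Implicit. Unset Printing Implicit Defensive.

Section EdgeGeneralPosition.
Variables (T : finType) (e : rel T).

Lemma dist_le_diam (u v : T) : dist e u v <= diam e.
Proof.
apply: leq_trans (leq_bigmax u).
exact: (leq_bigmax (F := fun v => dist e u v) v).
Qed.

Lemma card_walk_edges (u : T) (p : seq T) : #|walk_edges u p| <= size p.
Proof.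
by rewrite cardsE (leq_trans (card_size _)) // size_pairmap.
Qed.

Lemma card_walk_edges_geodesic (u v : T) (p : seq T) :
  geodesic e u v p -> #|walk_edges u p| <= diam e.
Proof.
case/andP=> _ /eqP size_p.
by rewrite (leq_trans (card_walk_edges u p)) // size_p dist_le_diam.
Qed.

Lemma edge_gp_set_edges : diam e <= 2 -> edge_gp_set e (edges e).
Proof.
move=> diam_le2; split=> // u v p geo_p.
rewrite ltnS (leq_trans (subset_leq_card (subsetIr _ _))) //.
exact: leq_trans (card_walk_edges_geodesic geo_p) diam_le2.
Qed.

Lemma edge_gp_setbP (S : {set {set T}}) :
  reflect (edge_gp_set e S) (edge_gp_setb e S).
Proof. by rewrite /edge_gp_setb; case: excluded_middle_informative; constructor. Qed.

Lemma gpe_le_edges : gpe e <= #|edges e|.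
Proof.
apply/bigmax_leqP=> S /edge_gp_setbP [sub_S _].
exact: subset_leq_card.
Qed.

Lemma card_le_gpe (S : {set {set T}}) : edge_gp_set e S -> #|S| <= gpe e.
Proof. by move/edge_gp_setbP; apply: leq_bigmax_cond. Qed.

Lemma gpe_edges : diam e <= 2 -> gpe e = #|edges e|.
Proof.
move=> diam_le2; apply/eqP; rewrite eqn_leq gpe_le_edges.
exact/card_le_gpe/edge_gp_set_edges.
Qed.

End EdgeGeneralPosition.

Theorem lemma2p1 (T : finType) (e : rel T)
  (e_sym : symmetric e) (e_irr : irreflexive e)
  (e_conn : connected_graph e) (e_diam : diam e = 2) :
  gpe e = #|edges e|.
Proof. by rewrite gpe_edges ?e_diam. Qed.
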